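(* Let $G\in\mathcal{G}_{\Sigma,\Delta,\pi}$, $r\ge0$, $v\in V(G)$, and write $G^r_v=(H,v)$. Then for every disk $(H',v)\in\mathcal{D}^r_{\Sigma,\Delta,\pi}$ with $H'\subseteq G$, we have $H'\subseteq H$.
   Context: Fix an uncountably infinite set $\mathcal{V}$, sets $\Sigma,\Delta$, finite $\pi$. A graph $G$: countable $V(G)\subset\mathcal{V}$; a set $E(G)$ of pairwise disjoint two-element subsets of $V(G)\times\pi$; partial labelings $\sigma(G):V(G)\rightharpoonup\Sigma$, $\delta(G):E(G)\rightharpoonup\Delta$; $\mathcal{G}_{\Sigma,\Delta,\pi}$ the set of graphs. $G\subseteq H$: componentwise inclusion of $V,E,\sigma,\delta$ (partial functions as sets of pairs). $d_G$ shortest-path distance, $B_G(c,r)=\{u\mid d_G(c,u)\le r\}$. Disk $G^r_c=(H,c)$: $V(H)=B_G(c,r+1)$, $E(H)=\{\{u\!:\!i,v\!:\!j\}\in E(G)\mid\{u,v\}\cap B_G(c,r)\ne\emptyset\}$, $\sigma(H)=\sigma(G)|_{B_G(c,r)}$, $\delta(H)=\delta(G)|_{E(H)}$. $\mathcal{D}^r_{\Sigma,\Delta,\pi}$ is the set of all pointed graphs of the form $K^r_c$ for some graph $K$ and $c\in V(K)$. *)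

From mathcomp Require Import all_boot.
From mathcomp Require Import boolp classical_sets cardinality.
Set Implicit Arguments. Unset Strict Implicit. Unset Printing Implicit Defensive.
Local Open Scope classical_set_scope.

Section Graphs.
Variables (Vtx Sigma Delta : Type) (pi : finType).

Record graph := Graph {
  gV : set Vtx;
  gE : set (set (Vtx * pi));
  gsigma : Vtx -> option Sigma;
  gdelta : set (Vtx * pi) -> option Delta }.

Definition is_graph (G : graph) : Prop :=
  countable (gV G) /\
  (forall e, gE G e -> exists a b : Vtx * pi,
       a <> b /\ e = [set a; b] /\ gV G a.1 /\ gV G b.1) /\
  (forall e e', gE G e -> gE G e' -> e <> e' -> e `&` e' = set0) /\
  (forall v s, gsigma G v = Some s -> gV G v) /\
  (forall e d, gdelta G e = Some d -> gE G e).

(* componentwise inclusion, partial functions seen as sets of pairs *)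
Definition subgraph (G H : graph) : Prop :=
  gV G `<=` gV H /\ gE G `<=` gE H /\
  (forall v s, gsigma G v = Some s -> gsigma H v = Some s) /\
  (forall e d, gdelta G e = Some d -> gdelta H e = Some d).

Definition adj (G : graph) (u w : Vtx) : Prop :=
  exists i j, gE G [set (u, i); (w, j)].

Fixpoint ball (G : graph) (c : Vtx) (n : nat) : set Vtx :=
  match n with
  | 0 => [set u | u = c /\ gV G c]
  | n'.+1 => ball G c n' `|` [set u | exists w, ball G c n' w /\ adj G w u]
  end.

Definition disk_edges (G : graph) (c : Vtx) (r : nat) : set (set (Vtx * pi)) :=
  [set e | gE G e /\ exists x, e x /\ ball G c r x.1].

Definition disk (G : graph) (r : nat) (c : Vtx) : graph :=
  Graph (ball G c r.+1) (disk_edges G c r)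
        (fun v => if pselect (ball G c r v) then gsigma G v else None)
        (fun e => if pselect (disk_edges G c r e) then gdelta G e else None).

Definition is_disk (r : nat) (Hc : graph * Vtx) : Prop :=
  exists (K : graph) (c : Vtx), is_graph K /\ gV K c /\ Hc = (disk K r c, c).

End Graphs.

(* A disk of radius r around v that sits inside G only uses edges of G touching
   its inner ball; by induction on the radius, walks of length at most r + 1 from
   v in the disk are therefore walks in G, so its balls lie in the balls of G.
   Hence its vertices, edges and labels all survive the restriction defining the
   disk of G around v. *)
From mathcomp Require Import all_boot.
From mathcomp Require Import boolp classical_sets cardinality.
Set Implicit Arguments. Unset Strict Implicit. Unset Printing Implicit Defensive.
Local Open Scope classical_set_scope.

Section Balls.
Variables (Vtx Sigma Delta : Type) (pi : finType).
Implicit Types (G K : graph Vtx Sigma Delta pi) (v : Vtx) (r n m : nat).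

Lemma ball_le K v n m : n <= m -> ball K v n `<=` ball K v m.
Proof.
elim: m => [|m IHm]; first by rewrite leqn0 => /eqP ->.
rewrite leq_eqVlt => /orP[/eqP -> //|lt_nm] x Kx.
by left; exact: IHm.
Qed.

Lemma ball_sub_of_disk_edges G K r v :
  gV G v -> disk_edges K v r `<=` gE G ->
  forall n, n <= r.+1 -> ball K v n `<=` ball G v n.
Proof.
move=> Gv sub_edges; elim=> [|n IHn] le_nr u /=; first by case=> -> _.
have Kn_Gn := IHn (ltnW le_nr).
case=> [Ku|[w [Kw [i [j Kwu]]]]]; first by left; exact: Kn_Gn.
right; exists w; split; first exact: Kn_Gn.
exists i, j; apply: sub_edges; split => //.
by exists (w, i); split; [left | exact: ball_le Kw].
Qed.

Lemma disk_edges_sub G K r v :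
  gV G v -> disk_edges K v r `<=` gE G ->
  disk_edges K v r `<=` disk_edges G v r.
Proof.
move=> Gv sub_edges e Ke; split; first exact: sub_edges.
case: Ke => _ [x [ex Kx]].
by exists x; split => //; exact: (ball_sub_of_disk_edges Gv sub_edges (leqnSn r)).
Qed.

End Balls.

Lemma restricted_label_sub (T A : Type) (P Q : set T) (f g : T -> option A) :
  P `<=` Q ->
  (forall x a, (if pselect (P x) then g x else None) = Some a -> f x = Some a) ->
  forall x a, (if pselect (P x) then g x else None) = Some a ->
    (if pselect (Q x) then f x else None) = Some a.
Proof.
move=> PQ gf x a gxa; have fxa := gf x a gxa.
move: gxa; case: pselect => // Px _.
by case: pselect => // nQx; case: nQx; exact: PQ.
Qed.

Theorem lemma2p5 (Vtx Sigma Delta : Type) (pi : finType)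
  (Vtx_uncountable : ~ countable [set: Vtx])
  (G : graph Vtx Sigma Delta pi) (r : nat) (v : Vtx) :
  is_graph G -> gV G v ->
  forall H' : graph Vtx Sigma Delta pi,
    is_disk r (H', v) -> subgraph H' G -> subgraph H' (disk G r v).
Proof.
move=> _ Gv H' [K [c [_ [_ [-> <-]]]]] [_ [sub_E [sub_sigma sub_delta]]].
have sub_ball := ball_sub_of_disk_edges Gv sub_E.
split; first exact: sub_ball.
split; first exact: disk_edges_sub.
split; first exact: (restricted_label_sub (sub_ball r (leqnSn r)) sub_sigma).
exact: (restricted_label_sub (disk_edges_sub Gv sub_E) sub_delta).
Qed.
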